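(* Let $n\ge3$, let $S_n$ act on $V=\mathbb{C}^n$ by permutations, fix $a,b,c\in\mathbb{C}$, let $*\in\{L,C\}$, let $g$ be a $5$-cycle, and let $\phi^*_g$ be the $g$-component of $\phi(\kappa^*_{\mathrm{tri}},\kappa^L_{\mathrm{tri}})$. Then $\phi^C_g\equiv0$. Moreover, if $e_i\in V^g$ then $\phi^L_g(e_i,e_j,e_k)=0$ for all $j,k$, and for $1\leq i\leq n$, $$\phi^L_g(e_i,ge_i,g^2e_i)=2(a-b)^2\big(e_i+ge_i-g^2e_i-g^3e_i\big),$$ $$\phi^L_g(e_i,ge_i,g^3e_i)=2(a-b)^2\big(-2e_i+2g^2e_i+g^3e_i-g^4e_i\big).$$
   Context: $S_n$ acts by $\sigma e_i=e_{\sigma(i)}$; $V^g$ is the fixed space of $g$. $\kappa^L_{\mathrm{tri}}$ is the linear 2-cochain supported on 3-cycles with $\kappa^L_{(ijk)}(e_i,e_j)=\kappa^L_{(ijk)}(e_j,e_k)=\kappa^L_{(ijk)}(e_k,e_i)=a(e_i+e_j+e_k)+b\sum_{l\notin\{i,j,k\}}e_l$ and $\kappa^L_{(ijk)}(e_l,e_m)=0$ whenever $e_l$ or $e_m$ lies in $V^{(ijk)}$; $\kappa^C_{\mathrm{tri}}$ is the constant 2-cochain supported on 3-cycles with $\kappa^C_{(ijk)}(e_i,e_j)=\kappa^C_{(ijk)}(e_j,e_k)=\kappa^C_{(ijk)}(e_k,e_i)=c$ and $\kappa^C_{(ijk)}(e_l,e_m)=0$ whenever $e_l$ or $e_m$ lies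 in $V^{(ijk)}$. For $\alpha$ linear or constant and $\beta$ linear, $\phi(\alpha,\beta)=\sum_g\phi_gg$, $\phi_g=\sum_{xy=g}\phi_{x,y}$, $\phi_{x,y}(v_1,v_2,v_3)=\alpha_x(v_1+yv_1,\beta_y(v_2,v_3))+\alpha_x(v_2+yv_2,\beta_y(v_3,v_1))+\alpha_x(v_3+yv_3,\beta_y(v_1,v_2))$. *)

From HB Require Import structures.
From mathcomp Require Import all_boot all_order all_algebra all_fingroup.
From mathcomp Require Import complex Rstruct.
Set Implicit Arguments.
Unset Strict Implicit.
Unset Printing Implicit Defensive.
Import Order.TTheory GRing.Theory Num.Theory.
Local Open Scope ring_scope.

Definition CC : numClosedFieldType := (Rdefinitions.R)[i].

Section Defs.
Variable n : nat.

Definition Vn := 'cV[CC]_n.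
Definition evec (i : 'I_n) : Vn := delta_mx i 0.

(* Permutation action: (sigma v)_i = v_{sigma^-1 i}, so sigma e_i = e_{sigma i}. *)
Definition pact (s : 'S_n) (v : Vn) : Vn := \col_i v ((s^-1)%g i) 0.

Definition fixed_space (g : 'S_n) : pred Vn := fun v => pact g v == v.

Definition is_kcycle (k : nat) (g : 'S_n) : bool :=
  [exists i, (#|porbit g i| == k) &&
             [forall j, (j \notin porbit g i) ==> (g j == j)]].

(* For the 3-cycle
   g = (i j k) (i -> j -> k -> i), kappa(e_l, e_{g l}) = w for l moved,
   hence by alternation kappa(e_{g l}, e_l) = -w, and kappa vanishes on
   pairs involving a fixed e_l (and on (e_l,e_l)). *)
Definition kL_w (a b : CC) (g : 'S_n) : Vn :=
  \col_k (if g k != k then a else b).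

Definition kL_basis (a b : CC) (g : 'S_n) (l m : 'I_n) : Vn :=
  if (g l != l) && (m == g l) then kL_w a b g
  else if (g l != l) && (l == g m) then - kL_w a b g
  else 0.

Definition kC_basis (c : CC) (g : 'S_n) (l m : 'I_n) : CC :=
  if (g l != l) && (m == g l) then c
  else if (g l != l) && (l == g m) then - c
  else 0.

Definition kappaL_tri (a b : CC) (g : 'S_n) (u v : Vn) : Vn :=
  if is_kcycle 3 g then
    \sum_(l < n) \sum_(m < n) (u l 0 * v m 0) *: kL_basis a b g l m
  else 0.

Definition kappaC_tri (c : CC) (g : 'S_n) (u v : Vn) : CC :=
  if is_kcycle 3 g then
    \sum_(l < n) \sum_(m < n) (u l 0 * v m 0) * kC_basis c g l m
  else 0.

Definition phi_xy {W : zmodType} (alpha : 'S_n -> Vn -> Vn -> W)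
    (beta : 'S_n -> Vn -> Vn -> Vn) (x y : 'S_n) (v1 v2 v3 : Vn) : W :=
  alpha x (v1 + pact y v1) (beta y v2 v3)
  + alpha x (v2 + pact y v2) (beta y v3 v1)
  + alpha x (v3 + pact y v3) (beta y v1 v2).

(* phi_g = sum over x y = g, the product being composition (x y)(i) = x (y i),
   matching the left action sigma e_i = e_{sigma i}. *)
Definition phi_g {W : zmodType} (alpha : 'S_n -> Vn -> Vn -> W)
    (beta : 'S_n -> Vn -> Vn -> Vn) (g : 'S_n) (v1 v2 v3 : Vn) : W :=
  \sum_(x : 'S_n) \sum_(y : 'S_n | [forall i, g i == x (y i)])
     phi_xy alpha beta x y v1 v2 v3.

End Defs.

(* If x and y are 3-cycles whose product g is a 5-cycle, every point
   moved by g is moved by x or by y, so the supports of x and y meet in a single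
   point; hence x = (r, g r, g^2 r) and y = (g^2 r, g^3 r, g^4 r) for one of the
   five points r moved by g, and phi_g is a sum of five terms indexed by the
   rotations of the cycle of g.  The vector values of kappa^L_y are multiples of
   a vector with coordinates b at r, g r and a at g^2 r, so in each term
   kappa_x(v + y v, kappa^L_y(v', v'')) = 2 (a - b) (v_{g r} - v_r) K_y(v', v''),
   with K_y the alternating form of y.  The five resulting scalars cancel in
   cyclic sum, which gives phi^C_g = 0, and the values of phi^L_g follow by
   evaluating the five vector terms coordinatewise. *)

From HB Require Import structures.
From mathcomp Require Import all_boot all_order all_algebra all_fingroup.
From mathcomp Require Import complex Rstruct.
From mathcomp Require Import ring zify.
Import Order.TTheory GRing.Theory Num.Theory.
Local Open Scope ring_scope.
Set Implicit Arguments.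
Unset Strict Implicit.
Unset Printing Implicit Defensive.

Ltac neqs := repeat match goal with
  | |- context[?x == ?x] => rewrite eqxx
  | h : is_true (?x != ?y) |- context[?x == ?y] => rewrite (negbTE h)
  | h : is_true (?x != ?y) |- context[?y == ?x] => rewrite (eq_sym y x) (negbTE h)
  end; cbn [negb andb orb]; try done.

Section Moved.
Variable T : finType.
Implicit Types (s g x y : {perm T}) (r j : T).

Definition moved s : {set T} := [set j | s j != j].

Lemma moved_perm s r : (s r \in moved s) = (r \in moved s).
Proof. by rewrite !inE (inj_eq perm_inj). Qed.

Lemma moved_mul g x y : (forall j, g j = x (y j)) ->
  moved g \subset moved x :|: moved y.
Proof.
move=> gxy; apply/subsetP => j; rewrite !inE gxy; apply: contraR.
by rewrite negb_or !negbK => /andP[/eqP xj /eqP ->]; rewrite xj.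
Qed.

(* Otherwise each r in [moved x] lies in [moved y] or is mapped there by [x], so
   #|moved x| <= 2 #|moved x :&: moved y|, while [moved g] is covered by
   [moved x :|: moved y]. *)
Lemma moved_factor_fixed_arc g x y : (forall j, g j = x (y j)) ->
    (#|moved x| + 2 * #|moved y| < 2 * #|moved g|)%N ->
  exists2 r, r \in moved x & (r \notin moved y) && (x r \notin moved y).
Proof.
move=> gxy lt_card; set A := moved x; set B := moved y.
have le_AB : (#|moved g| + #|A :&: B| <= #|A| + #|B|)%N.
  by rewrite -(cardsUI A B) leq_add2r subset_leq_card ?moved_mul.
apply/exists_inP; apply: contraLR lt_card; rewrite negb_exists_in -leqNgt.
move=> /forall_inP noAB.
have sub_A : A \subset (A :&: B) :|: x @^-1: (A :&: B).
  apply/subsetP => r Ar.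
  rewrite in_setU [r \in x @^-1: _]in_set !in_setI moved_perm Ar /=.
  by have := noAB r Ar; rewrite negb_and !negbK.
have := subset_leq_card sub_A; rewrite cardsU card_preimset //; last exact: perm_inj.
rewrite -/A -/B; lia.
Qed.
End Moved.

Section Cycle3.
Variables (T : finType) (r0 r1 r2 : T).

Definition cycle3 : {perm T} := (tperm r0 r1 * tperm r0 r2)%g.

Hypotheses (h01 : r0 != r1) (h02 : r0 != r2) (h12 : r1 != r2).

Lemma cycle3E j :
  cycle3 j = if j == r0 then r1 else if j == r1 then r2 else if j == r2 then r0 else j.
Proof.
rewrite permM.
case: (eqVneq j r0) => [->|j0]; first by rewrite tpermL tpermD // eq_sym.
case: (eqVneq j r1) => [->|j1]; first by rewrite tpermR tpermL; neqs.
case: (eqVneq j r2) => [->|j2]; first by rewrite (tpermD h02 h12) tpermR; neqs.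
by rewrite !tpermD // eq_sym.
Qed.

Lemma moved_cycle3 : moved cycle3 =i [:: r0; r1; r2].
Proof.
move=> j; rewrite !inE cycle3E.
case: (eqVneq j r0) => [->|j0]; first by neqs.
case: (eqVneq j r1) => [->|j1]; first by neqs.
by case: (eqVneq j r2) => [->|j2]; neqs.
Qed.

Lemma cycle3_fix j : j \notin [:: r0; r1; r2] -> cycle3 j = j.
Proof. by rewrite -moved_cycle3 inE negbK => /eqP. Qed.

Lemma eq_cycle3 (s : {perm T}) : s r0 = r1 -> s r1 = r2 -> s r2 = r0 ->
  (forall j, j \notin [:: r0; r1; r2] -> s j = j) -> s = cycle3.
Proof.
move=> s0 s1 s2 s_fix; apply/permP => j; rewrite cycle3E.
case: (eqVneq j r0) => [->|j0] //; case: (eqVneq j r1) => [->|j1] //.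
case: (eqVneq j r2) => [->|j2] //; by apply: s_fix; rewrite !inE; neqs.
Qed.

End Cycle3.

Section KCycles.
Variable n : nat.
Implicit Types (s x : 'S_n) (r j : 'I_n).

Lemma porbit_fix s r : s r = r -> porbit s r = [set r].
Proof.
move=> sr; apply/setP => j; rewrite inE.
apply/porbitP/eqP => [[i ->]|->]; first by rewrite permX iter_fix.
by exists 0%N; rewrite expg0 perm1.
Qed.

Lemma porbit_moved s r : s r != r -> porbit s r \subset moved s.
Proof.
move=> sr; apply/subsetP => _ /porbitP[i ->].
by rewrite inE -permM -expgSr expgS permM (inj_eq perm_inj).
Qed.

Lemma kcycle_porbit k s r : is_kcycle k s -> s r != r ->
  #|porbit s r| = k /\ forall j, j \notin porbit s r -> s j = j.
Proof.
case/existsP => i /andP[/eqP card_i /forallP fix_i] sr.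
have r_i : r \in porbit s i.
  by apply: contraR sr => /(implyP (fix_i r)).
have -> : porbit s r = porbit s i by apply/eqP; rewrite eq_porbit_mem.
by split=> // j /(implyP (fix_i j))/eqP.
Qed.

Lemma moved_kcycle k s r : is_kcycle k s -> s r != r -> moved s = porbit s r.
Proof.
move=> ks sr; have [_ fix_r] := kcycle_porbit ks sr.
apply/eqP; rewrite eqEsubset porbit_moved // andbT.
by apply/subsetP => j; rewrite inE; apply: contraR => /fix_r ->; rewrite eqxx.
Qed.

Lemma kcycle_moved_point k s : (1 < k)%N -> is_kcycle k s -> exists r, s r != r.
Proof.
move=> k_gt1 /existsP[r /andP[/eqP card_r _]]; exists r.
by apply: contraTneq k_gt1 => /porbit_fix orb_r; rewrite -card_r orb_r cards1.
Qed.

Lemma card_moved_kcycle k s : is_kcycle k s -> (1 < k)%N -> #|moved s| = k.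
Proof.
move=> ks /kcycle_moved_point/(_ ks)[r sr].
by rewrite (moved_kcycle ks sr); case: (kcycle_porbit ks sr).
Qed.

Lemma kcycle_traject k s r : is_kcycle k s -> s r != r ->
  [/\ uniq (traject s r k), iter k s r = r & moved s =i traject s r k].
Proof.
move=> ks sr; have [card_r _] := kcycle_porbit ks sr.
rewrite (moved_kcycle ks sr) -card_r; split.
- exact: uniq_traject_porbit.
- exact: iter_porbit.
- exact: porbit_traject.
Qed.

Lemma kcycle3_cycle3 x r : is_kcycle 3 x -> x r != r -> x = cycle3 r (x r) (x (x r)).
Proof.
move=> x3 xr; have [/= + x3r mov_x] := kcycle_traject x3 xr.
rewrite !inE !negb_or => /and3P[/andP[h01 h02] h12 _].
apply: eq_cycle3 => // j; rewrite -mov_x inE negbK; exact/eqP.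
Qed.

Lemma cycle3_kcycle r0 r1 r2 : r0 != r1 -> r0 != r2 -> r1 != r2 ->
  is_kcycle 3 (cycle3 r0 r1 r2).
Proof.
move=> h01 h02 h12; set c := cycle3 r0 r1 r2.
have mov_c := moved_cycle3 h01 h02 h12.
have c0 : c r0 != r0 by rewrite cycle3E; neqs.
have orb_c : porbit c r0 = moved c.
  apply/eqP; rewrite eqEsubset porbit_moved //=.
  apply/subsetP => j; rewrite mov_c !inE.
  case/or3P => /eqP ->; apply/porbitP; [exists 0%N | exists 1%N | exists 2%N];
    by rewrite permX /= ?cycle3E; neqs.
apply/existsP; exists r0; rewrite orb_c (eq_card mov_c).
apply/andP; split; first by apply/eqP/card_uniqP; rewrite /= !inE; neqs.
by apply/forallP => j; rewrite inE negbK implybb.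
Qed.

End KCycles.

Section Cochains.
Variable n : nat.
Implicit Types (s : 'S_n) (i j : 'I_n) (u v : Vn n).

Lemma evecE i j : evec i j 0 = (j == i)%:R.
Proof. by rewrite mxE eqxx andbT. Qed.

Lemma evec_inj : injective (@evec n).
Proof.
move=> i j /matrixP/(_ i 0); rewrite !evecE eqxx.
by case: eqP => // _ /eqP; rewrite oner_eq0.
Qed.

Lemma pact_evec s i : pact s (evec i) = evec (s i).
Proof.
apply/matrixP => j k; rewrite ord1 mxE !evecE.
by rewrite (canF_eq (permKV s)).
Qed.

Lemma fixed_space_evec s i : (evec i \in fixed_space s) = (s i == i).
Proof. by rewrite unfold_in /fixed_space pact_evec (inj_eq evec_inj). Qed.

Lemma kL_w_moved a b s : kL_w a b s = \col_j (if j \in moved s then a else b).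
Proof. by apply/matrixP => j k; rewrite !mxE inE. Qed.

Definition cycle_form s u v : CC :=
  \sum_(l < n) \sum_(m < n) (u l 0 * v m 0) * kC_basis 1 s l m.

Lemma kappaL_triE a b s u v : kappaL_tri a b s u v =
  if is_kcycle 3 s then cycle_form s u v *: kL_w a b s else 0.
Proof.
rewrite /kappaL_tri /cycle_form; case: ifP => // _.
rewrite scaler_suml; apply: eq_bigr => l _; rewrite scaler_suml; apply: eq_bigr => m _.
rewrite -[RHS]scalerA; congr (_ *: _); rewrite /kL_basis /kC_basis.
by do 2?case: ifP => _; rewrite ?scale1r ?scaleN1r ?scale0r.
Qed.

Lemma kappaC_triE c s u v : kappaC_tri c s u v =
  if is_kcycle 3 s then c * cycle_form s u v else 0.
Proof.
rewrite /kappaC_tri /cycle_form; case: ifP => // _.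
rewrite mulr_sumr; apply: eq_bigr => l _; rewrite mulr_sumr; apply: eq_bigr => m _.
rewrite mulrCA; congr (_ * _); rewrite /kC_basis.
by do 2?case: ifP => _; rewrite ?mulr1 ?mulrN1 ?mulr0.
Qed.

Lemma cycle_formr0 s u : cycle_form s u 0 = 0.
Proof.
by rewrite /cycle_form big1 // => l _; rewrite big1 // => m _; rewrite mxE mulr0 mul0r.
Qed.

Lemma kappaL_tri_r0 a b s u : kappaL_tri a b s u 0 = 0.
Proof. by rewrite kappaL_triE cycle_formr0 scale0r if_same. Qed.

Lemma kappaC_tri_r0 c s u : kappaC_tri c s u 0 = 0.
Proof. by rewrite kappaC_triE cycle_formr0 mulr0 if_same. Qed.

Definition cycle3_form (r0 r1 r2 : 'I_n) u v : CC :=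
  u r0 0 * (v r1 0 - v r2 0) + u r1 0 * (v r2 0 - v r0 0) + u r2 0 * (v r0 0 - v r1 0).

Lemma sum_ord_supported (V : zmodType) (s : seq 'I_n) (F : 'I_n -> V) :
  uniq s -> (forall j, j \notin s -> F j = 0) -> \sum_j F j = \sum_(j <- s) F j.
Proof.
move=> s_uniq F0; rewrite (big_uniq _ s_uniq) [RHS]big_mkcond.
by apply: eq_bigr => j _; case: ifPn => // /F0.
Qed.

Lemma kC_basis_fixl c s l m : s l = l -> kC_basis c s l m = 0.
Proof. by rewrite /kC_basis => ->; rewrite eqxx. Qed.

Lemma kC_basis_fixr c s l m : s m = m -> kC_basis c s l m = 0.
Proof.
move=> sm; rewrite /kC_basis sm.
case: (eqVneq (s l) l) => [// | sl].
have [ml | _] := eqVneq m (s l).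
  by have := sm; rewrite ml => /perm_inj sll; rewrite sll eqxx in sl.
have [lm | _] := eqVneq l m; last by rewrite !andbF.
by move: sl; rewrite lm sm eqxx.
Qed.

Lemma cycle_form_cycle3 r0 r1 r2 u v : r0 != r1 -> r0 != r2 -> r1 != r2 ->
  cycle_form (cycle3 r0 r1 r2) u v = cycle3_form r0 r1 r2 u v.
Proof.
move=> h01 h02 h12; have r_uniq : uniq [:: r0; r1; r2] by rewrite /= !inE; neqs.
have c_fix := cycle3_fix h01 h02 h12.
rewrite /cycle_form (sum_ord_supported r_uniq) => [|l /c_fix l_fix]; last first.
  by rewrite big1 // => m _; rewrite kC_basis_fixl ?mulr0.
rewrite !big_cons big_nil !(sum_ord_supported r_uniq);
  try by move=> m /c_fix m_fix; rewrite kC_basis_fixr ?mulr0.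
rewrite !big_cons !big_nil /kC_basis !cycle3E //; neqs.
rewrite /cycle3_form; ring.
Qed.

End Cochains.

Lemma uniq5_neq (T : eqType) (x0 x1 x2 x3 x4 : T) : uniq [:: x0; x1; x2; x3; x4] ->
  [/\ [/\ x0 != x1, x0 != x2, x0 != x3 & x0 != x4], [/\ x1 != x2, x1 != x3 & x1 != x4],
      x2 != x3, x2 != x4 & x3 != x4].
Proof.
rewrite /= !inE !negb_or.
by case/and5P => /and4P[-> -> -> ->] /and3P[-> -> ->] /andP[-> ->] ->.
Qed.

Lemma points5_ind (T : eqType) (r0 r1 r2 r3 r4 : T) (P : T -> Prop) :
  P r0 -> P r1 -> P r2 -> P r3 -> P r4 ->
  (forall j, j != r0 -> j != r1 -> j != r2 -> j != r3 -> j != r4 -> P j) ->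
  forall j, P j.
Proof.
move=> P0 P1 P2 P3 P4 P_other j.
case: (eqVneq j r0) => [-> //|j0]; case: (eqVneq j r1) => [-> //|j1].
case: (eqVneq j r2) => [-> //|j2]; case: (eqVneq j r3) => [-> //|j3].
by case: (eqVneq j r4) => [-> //|j4]; apply: P_other.
Qed.

Definition rot5_sum (I : Type) (V : zmodType) (F : I -> I -> I -> I -> I -> V)
    (r0 r1 r2 r3 r4 : I) : V :=
  F r0 r1 r2 r3 r4 + F r1 r2 r3 r4 r0 + F r2 r3 r4 r0 r1 + F r3 r4 r0 r1 r2
  + F r4 r0 r1 r2 r3.

Section PentagonTerms.
Variable n : nat.
Implicit Types (r j : 'I_n) (v : Vn n).

Definition pentagon_term (v1 v2 v3 : Vn n) (r0 r1 r2 r3 r4 : 'I_n) : CC :=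
  (v1 r1 0 - v1 r0 0) * cycle3_form r2 r3 r4 v2 v3
  + (v2 r1 0 - v2 r0 0) * cycle3_form r2 r3 r4 v3 v1
  + (v3 r1 0 - v3 r0 0) * cycle3_form r2 r3 r4 v1 v2.

Definition kappaL_summand (a b : CC) (v1 v2 v3 : Vn n) (r0 r1 r2 r3 r4 : 'I_n) : Vn n :=
  (2 * (a - b) * pentagon_term v1 v2 v3 r0 r1 r2 r3 r4)
    *: \col_j (if j \in [:: r0; r1; r2] then a else b).

Lemma rot5_sum_pentagon_term (v1 v2 v3 : Vn n) (r0 r1 r2 r3 r4 : 'I_n) :
  rot5_sum (pentagon_term v1 v2 v3) r0 r1 r2 r3 r4 = 0.
Proof. rewrite /rot5_sum /pentagon_term /cycle3_form; ring. Qed.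

Lemma pentagon_term_eq0 (v1 v2 v3 : Vn n) (r0 r1 r2 r3 r4 : 'I_n) :
  {in [:: r0; r1; r2; r3; r4], forall j, v1 j 0 = 0} ->
  pentagon_term v1 v2 v3 r0 r1 r2 r3 r4 = 0.
Proof.
move=> v1_0; rewrite /pentagon_term /cycle3_form !v1_0 ?inE ?eqxx ?orbT //.
ring.
Qed.

Variables r0 r1 r2 r3 r4 : 'I_n.
Hypotheses (h01 : r0 != r1) (h02 : r0 != r2) (h03 : r0 != r3) (h04 : r0 != r4)
  (h12 : r1 != r2) (h13 : r1 != r3) (h14 : r1 != r4)
  (h23 : r2 != r3) (h24 : r2 != r4) (h34 : r3 != r4).

Lemma cycle_form_shift a b k v :
  cycle_form (cycle3 r0 r1 r2) (v + pact (cycle3 r2 r3 r4) v)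
    (k *: kL_w a b (cycle3 r2 r3 r4))
  = 2 * k * (a - b) * (v r1 0 - v r0 0).
Proof.
have y_fix j : j \notin [:: r2; r3; r4] -> (cycle3 r2 r3 r4)^-1%g j = j.
  by move/(cycle3_fix h23 h24 h34) => fix_j; rewrite -{1}fix_j permK.
rewrite cycle_form_cycle3 // /cycle3_form !mxE (y_fix r0) ?(y_fix r1) ?inE; neqs.
rewrite !cycle3E //; neqs; ring.
Qed.

Lemma phi_xy_kappaC_pentagon a b c v1 v2 v3 :
  phi_xy (kappaC_tri c) (kappaL_tri a b) (cycle3 r0 r1 r2) (cycle3 r2 r3 r4) v1 v2 v3
  = 2 * c * (a - b) * pentagon_term v1 v2 v3 r0 r1 r2 r3 r4.
Proof.
rewrite /phi_xy !kappaC_triE !kappaL_triE !cycle3_kcycle //= !cycle_form_shift.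
by rewrite !cycle_form_cycle3 // /pentagon_term; ring.
Qed.

Lemma phi_xy_kappaL_pentagon a b v1 v2 v3 :
  phi_xy (kappaL_tri a b) (kappaL_tri a b) (cycle3 r0 r1 r2) (cycle3 r2 r3 r4) v1 v2 v3
  = kappaL_summand a b v1 v2 v3 r0 r1 r2 r3 r4.
Proof.
rewrite /phi_xy !kappaL_triE !cycle3_kcycle //= !cycle_form_shift.
rewrite -!scalerDl kL_w_moved; congr (_ *: _).
  by rewrite !cycle_form_cycle3 // /pentagon_term; ring.
by apply/matrixP => j k; rewrite !mxE moved_cycle3.
Qed.

Lemma rot5_sum_kappaL_012 a b :
  rot5_sum (kappaL_summand a b (evec r0) (evec r1) (evec r2)) r0 r1 r2 r3 r4
  = (2 * (a - b) ^+ 2) *: (evec r0 + evec r1 - evec r2 - evec r3).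
Proof.
rewrite /rot5_sum /kappaL_summand /pentagon_term /cycle3_form !evecE; neqs.
apply/matrixP => j k; rewrite ord1.
elim/(@points5_ind _ r0 r1 r2 r3 r4): j => [||||| j j0 j1 j2 j3 j4];
  by rewrite !mxE !inE eqxx ?andbT; neqs; rewrite ?mulr0n ?mulr1n; ring.
Qed.

Lemma rot5_sum_kappaL_013 a b :
  rot5_sum (kappaL_summand a b (evec r0) (evec r1) (evec r3)) r0 r1 r2 r3 r4
  = (2 * (a - b) ^+ 2) *:
      (- (2%:R *: evec r0) + 2%:R *: evec r2 + evec r3 - evec r4).
Proof.
rewrite /rot5_sum /kappaL_summand /pentagon_term /cycle3_form !evecE; neqs.
apply/matrixP => j k; rewrite ord1.
elim/(@points5_ind _ r0 r1 r2 r3 r4): j => [||||| j j0 j1 j2 j3 j4];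
  by rewrite !mxE !inE eqxx ?andbT; neqs; rewrite ?mulr0n ?mulr1n; ring.
Qed.

End PentagonTerms.

Section FiveCycle.
Variables (n : nat) (g : 'S_n).
Hypothesis g5 : is_kcycle 5 g.
Implicit Types (x : 'S_n) (r j : 'I_n).

Definition arc3 r := cycle3 r (g r) (g (g r)).

Lemma cycle5_at r : g r != r ->
  [/\ uniq [:: r; g r; g (g r); g (g (g r)); g (g (g (g r)))],
      g (g (g (g (g r)))) = r
    & moved g =i [:: r; g r; g (g r); g (g (g r)); g (g (g (g r)))]].
Proof. by move=> gr; have [] := kcycle_traject g5 gr. Qed.

Lemma arc3_moved r : g r != r -> moved (arc3 r) =i [:: r; g r; g (g r)].
Proof.
by case/cycle5_at => /uniq5_neq[[? ? _ _] [? _ _] _ _ _] _ _; apply: moved_cycle3.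
Qed.

Lemma arc3_cofactor r : g r != r -> (g * (arc3 r)^-1)%g = arc3 (g (g r)).
Proof.
case/cycle5_at => /uniq5_neq[[h01 h02 h03 h04] [h12 h13 h14] h23 h24 h34] g5r mov_g.
apply/permP => j; rewrite permM; apply: (canLR (permK _)); rewrite /arc3 !cycle3E //.
elim/(@points5_ind _ r (g r) (g (g r)) (g (g (g r))) (g (g (g (g r))))): j
  => [||||| j j0 j1 j2 j3 j4]; rewrite ?g5r; neqs.
have : j \notin moved g by rewrite mov_g !inE; neqs.
by rewrite inE negbK => /eqP ->; neqs.
Qed.

Lemma arc3_inj : {in moved g &, injective arc3}.
Proof.
move=> r r'; rewrite !inE => gr gr' eq_arc.
have : r' \in moved (arc3 r) by rewrite eq_arc arc3_moved // mem_head.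
rewrite arc3_moved // !inE.
case/cycle5_at: gr => /uniq5_neq[[h01 h02 h03 h04] [h12 h13 h14] h23 h24 h34] _ _.
case/or3P => /eqP r'E //; subst r'.
- have := congr1 (fun s : 'S_n => s (g (g r))) eq_arc.
  by rewrite /arc3 !cycle3E //; neqs => /eqP; neqs.
- have := congr1 (fun s : 'S_n => s r) eq_arc.
  by rewrite /arc3 !cycle3E //; neqs => /eqP; neqs.
Qed.

Lemma factor_arc3 x : is_kcycle 3 x -> is_kcycle 3 (g * x^-1) ->
  exists2 r, r \in moved g & x = arc3 r.
Proof.
move=> x3 y3; set y := (g * x^-1)%g in y3.
have gxy j : g j = x (y j) by rewrite permM permKV.
have [r xr /andP[yr yxr]] :
    exists2 r, r \in moved x & (r \notin moved y) && (x r \notin moved y).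
  apply: moved_factor_fixed_arc gxy _.
  by rewrite (card_moved_kcycle x3) ?(card_moved_kcycle y3) ?(card_moved_kcycle g5).
move: xr yr yxr; rewrite !inE !negbK => xr /eqP yr /eqP yxr.
have gr : g r = x r by rewrite gxy yr.
exists r; first by rewrite inE gr.
by rewrite /arc3 gr gxy yxr; apply: kcycle3_cycle3.
Qed.

Lemma phi_g_cycle5 (W : zmodType) (alpha : 'S_n -> Vn n -> Vn n -> W) a b v1 v2 v3 :
    (forall x u w, ~~ is_kcycle 3 x -> alpha x u w = 0) ->
    (forall x u, alpha x u 0 = 0) ->
  phi_g alpha (kappaL_tri a b) g v1 v2 v3
  = \sum_(r in moved g)
      phi_xy alpha (kappaL_tri a b) (arc3 r) (arc3 (g (g r))) v1 v2 v3.
Proof.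
move=> alpha_tri alpha_r0.
pose F x y := phi_xy alpha (kappaL_tri a b) x y v1 v2 v3.
have F0 x : ~~ (is_kcycle 3 x && is_kcycle 3 (g * x^-1)) -> F x (g * x^-1)%g = 0.
  case/nandP => [x3 | y3]; rewrite /F /phi_xy; first by rewrite !alpha_tri ?addr0.
  by rewrite !kappaL_triE (negbTE y3) !alpha_r0 !addr0.
have cofactorP x (y : 'S_n) : [forall j, g j == x (y j)] = (y == (g * x^-1)%g).
  apply/forallP/eqP => [gxy | ->]; last by move=> j; rewrite permM permKV.
  by apply/permP => j; rewrite permM (eqP (gxy j)) permK.
rewrite /phi_g (eq_bigr (fun x => F x (g * x^-1)%g)) => [|x _]; last first.
  by apply: big_pred1 => y; apply: cofactorP.
rewrite (bigID (mem (arc3 @: moved g))) /= [X in _ + X]big1 ?addr0 => [|x not_arc].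
  rewrite big_imset /=; last exact: arc3_inj.
  by apply: eq_bigr => r; rewrite inE => gr; rewrite arc3_cofactor.
apply: F0; apply: contra not_arc => /andP[x3 y3].
by have [r gr ->] := factor_arc3 x3 y3; apply: imset_f.
Qed.

Lemma sum_moved_cycle5 (V : zmodType) (G : 'I_n -> 'I_n -> 'I_n -> 'I_n -> 'I_n -> V)
    p : g p != p ->
  \sum_(r in moved g) G r (g r) (g (g r)) (g (g (g r))) (g (g (g (g r))))
  = rot5_sum G p (g p) (g (g p)) (g (g (g p))) (g (g (g (g p)))).
Proof.
case/cycle5_at => p_uniq g5p mov_g.
rewrite (eq_bigl _ _ mov_g) -big_uniq // !big_cons big_nil /= addr0 g5p.
by rewrite /rot5_sum !addrA.
Qed.

Lemma phi_g_kappaL_cycle5 a b v1 v2 v3 :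
  phi_g (kappaL_tri a b) (kappaL_tri a b) g v1 v2 v3
  = \sum_(r in moved g)
      kappaL_summand a b v1 v2 v3 r (g r) (g (g r)) (g (g (g r))) (g (g (g (g r)))).
Proof.
rewrite phi_g_cycle5 => [|x u w x3|x u]; last 2 first.
- by rewrite /kappaL_tri (negbTE x3).
- exact: kappaL_tri_r0.
apply: eq_bigr => r; rewrite inE => /cycle5_at[/uniq5_neq[[? ? ? ?] [? ? ?] ? ? ?] _ _].
exact: phi_xy_kappaL_pentagon.
Qed.

Lemma phi_g_kappaC_cycle5 a b c v1 v2 v3 :
  phi_g (kappaC_tri c) (kappaL_tri a b) g v1 v2 v3 = 0.
Proof.
rewrite phi_g_cycle5 => [|x u w x3|x u]; last 2 first.
- by rewrite /kappaC_tri (negbTE x3).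
- exact: kappaC_tri_r0.
rewrite (eq_bigr (fun r => 2 * c * (a - b) *
    pentagon_term v1 v2 v3 r (g r) (g (g r)) (g (g (g r))) (g (g (g (g r)))))) => [|r].
  have [p gp] := kcycle_moved_point (isT : (1 < 5)%N) g5.
  by rewrite -mulr_sumr (sum_moved_cycle5 _ gp) rot5_sum_pentagon_term mulr0.
rewrite inE => /cycle5_at[/uniq5_neq[[? ? ? ?] [? ? ?] ? ? ?] _ _].
exact: phi_xy_kappaC_pentagon.
Qed.

Lemma phi_g_kappaL_fixed a b i j k : g i = i ->
  phi_g (kappaL_tri a b) (kappaL_tri a b) g (evec i) (evec j) (evec k) = 0.
Proof.
move=> gi; rewrite phi_g_kappaL_cycle5 big1 // => r.
rewrite inE => /cycle5_at[_ _ mov_g].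
rewrite /kappaL_summand pentagon_term_eq0 ?mulr0 ?scale0r // => l.
rewrite -mov_g evecE inE => gl.
suff /negbTE-> : l != i by [].
by apply: contraNneq gl => ->; rewrite gi.
Qed.

Lemma phi_g_kappaL_012 a b p : g p != p ->
  phi_g (kappaL_tri a b) (kappaL_tri a b) g (evec p) (evec (g p)) (evec (g (g p)))
  = (2 * (a - b) ^+ 2) *: (evec p + evec (g p) - evec (g (g p)) - evec (g (g (g p)))).
Proof.
move=> gp; rewrite phi_g_kappaL_cycle5 (sum_moved_cycle5 _ gp).
case/cycle5_at: gp => /uniq5_neq[[? ? ? ?] [? ? ?] ? ? ?] _ _.
exact: rot5_sum_kappaL_012.
Qed.

Lemma phi_g_kappaL_013 a b p : g p != p ->
  phi_g (kappaL_tri a b) (kappaL_tri a b) g (evec p) (evec (g p)) (evec (g (g (g p))))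
  = (2 * (a - b) ^+ 2) *: (- (2%:R *: evec p) + 2%:R *: evec (g (g p))
                           + evec (g (g (g p))) - evec (g (g (g (g p))))).
Proof.
move=> gp; rewrite phi_g_kappaL_cycle5 (sum_moved_cycle5 _ gp).
case/cycle5_at: gp => /uniq5_neq[[? ? ? ?] [? ? ?] ? ? ?] _ _.
exact: rot5_sum_kappaL_013.
Qed.

End FiveCycle.

Theorem proposition7p3 (n : nat) (hn : (3 <= n)%N) (a b c : CC) (g : 'S_n) :
  is_kcycle 5 g ->
  (forall v1 v2 v3 : Vn n,
      phi_g (kappaC_tri c) (kappaL_tri a b) g v1 v2 v3 = 0)
  /\ (forall i : 'I_n, evec i \in fixed_space g ->
        forall j k : 'I_n,
          phi_g (kappaL_tri a b) (kappaL_tri a b) g (evec i) (evec j) (evec k) = 0)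
  /\ (forall i : 'I_n,
        phi_g (kappaL_tri a b) (kappaL_tri a b) g
          (evec i) (pact g (evec i)) (pact ((g ^+ 2)%g) (evec i))
        = (2 * (a - b) ^+ 2) *:
            (evec i + pact g (evec i) - pact ((g ^+ 2)%g) (evec i)
             - pact ((g ^+ 3)%g) (evec i)))
  /\ (forall i : 'I_n,
        phi_g (kappaL_tri a b) (kappaL_tri a b) g
          (evec i) (pact g (evec i)) (pact ((g ^+ 3)%g) (evec i))
        = (2 * (a - b) ^+ 2) *:
            (- (2%:R *: evec i) + 2%:R *: pact ((g ^+ 2)%g) (evec i)
             + pact ((g ^+ 3)%g) (evec i) - pact ((g ^+ 4)%g) (evec i))).
Proof.
move=> g5; split; first exact: phi_g_kappaC_cycle5.
split.
  by move=> i; rewrite fixed_space_evec => /eqP gi j k; exact: phi_g_kappaL_fixed.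
split=> i; rewrite !pact_evec !permX /=; have [gi | gi] := eqVneq (g i) i.
- by rewrite !gi phi_g_kappaL_fixed // addrK subrr scaler0.
- exact: phi_g_kappaL_012.
- by rewrite !gi phi_g_kappaL_fixed // addNr add0r subrr scaler0.
- exact: phi_g_kappaL_013.
Qed.
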